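(* Let $m\ge1$, $n\ge0$, $0\le i\le m$. Then the inclusion $\Lambda^{m,n}_i=(\Lambda^m_i\times\Delta^n)\cup(\Delta^m\times\partial\Delta^n)\hookrightarrow\Delta^m\times\Delta^n$ is an $m$-expansion. Likewise, for $m\ge0$, $n\ge1$, $0\le j\le n$, the inclusion $\tilde\Lambda^{m,n}_j=(\partial\Delta^m\times\Delta^n)\cup(\Delta^m\times\Lambda^n_j)\hookrightarrow\Delta^m\times\Delta^n$ is an $n$-expansion.
   Context: $\Lambda^p_i=\bigcup_{j\ne i}\partial_j\Delta^p$ is the horn and $\partial\Delta^p$ the boundary. For $m>0$, an inclusion of simplicial sets $S\hookrightarrow T$ is an $m$-expansion if there is a filtration $S=F_{-1}T\subset F_0T\subset F_1T\subset\cdots$ with $T=\bigcup_\ell F_\ell T$, a weakly monotone sequence $n_\ell\ge m$ ($\ell\ge0$), indices $0\le i_\ell\le n_\ell$, and maps $x_\ell:\Delta^{n_\ell}\to F_\ell T$, $y_\ell:\Lambda^{n_\ell}_{i_\ell}\to F_{\ell-1}T$ making $F_\ell T$ the pushout of $F_{\ell-1}T\leftarrow\Lambda^{n_\ell}_{i_\ell}\hookrightarrow\Delta^{n_\ell}$. *)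

From mathcomp Require Import all_boot.
Set Implicit Arguments. Unset Strict Implicit. Unset Printing Implicit Defensive.

(* Morphisms [k] -> [n] of the simplex category: weakly monotone maps
   'I_k.+1 -> 'I_n.+1. *)
Definition monob k n (f : {ffun 'I_k.+1 -> 'I_n.+1}) : bool :=
  [forall a : 'I_k.+1, forall b : 'I_k.+1, (a <= b) ==> (f a <= f b)].
Definition mono k n := {f : {ffun 'I_k.+1 -> 'I_n.+1} | monob f}.

Lemma monob_comp k l n (g : mono l n) (f : mono k l) :
  monob [ffun a => sval g (sval f a)].
Proof.
case: g f => [g Hg] [f Hf] /=; apply/forallP => a; apply/forallP => b.
apply/implyP => ab; rewrite !ffunE.
have/forallP/(_ a)/forallP/(_ b)/implyP := Hf => /(_ ab) fab.
by have/forallP/(_ (f a))/forallP/(_ (f b))/implyP := Hg => /(_ fab).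
Qed.

Definition mcomp k l n (g : mono l n) (f : mono k l) : mono k n :=
  exist (fun h => monob h) _ (monob_comp g f).

Record sSet := SSet {
  ssob :> nat -> Type;
  sact : forall k n, mono k n -> ssob n -> ssob k;
  sact_id : forall n (f : mono n n) (x : ssob n),
      (forall a, sval f a = a) -> sact f x = x;
  sact_comp : forall k l n (f : mono k l) (g : mono l n) (h : mono k n) (x : ssob n),
      (forall a, sval h a = sval g (sval f a)) -> sact f (sact g x) = sact h x }.
Arguments sact {s k n}.

Definition Delta (n : nat) : sSet.
Proof.
refine (@SSet (fun k => mono k n) (fun k l f s => mcomp s f) _ _).
- move=> m f x H; apply: val_inj; apply/ffunP => a; by rewrite ffunE /= H.
- move=> k l m f g h x H; apply: val_inj; apply/ffunP => a.
  by rewrite /= !ffunE H.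
Defined.

Definition ProdS (X Y : sSet) : sSet.
Proof.
refine (@SSet (fun k => (X k * Y k)%type)
   (fun k n f p => (sact f p.1, sact f p.2)) _ _).
- by move=> n f [x y] H /=; rewrite !sact_id.
- by move=> k l n f g h [x y] H /=; rewrite !(sact_comp _ H).
Defined.

Record smap (X Y : sSet) := SMap {
  smf :> forall n, X n -> Y n;
  smnat : forall k n (f : mono k n) (x : X n), smf (sact f x) = sact f (smf x) }.

Record subcx (X : sSet) := SubCx {
  smem : forall n, X n -> Prop;
  sclosed : forall k n (f : mono k n) (x : X n), smem x -> smem (sact f x) }.
Arguments smem {X} s {n}.

Record submap (X : sSet) (A : subcx X) (Z : sSet) := SubMap {
  subf :> forall n (x : X n), smem A x -> Z n;
  subpi : forall n (x : X n) (p q : smem A x), subf p = subf q;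
  subnat : forall k n (f : mono k n) (x : X n) (p : smem A x) (q : smem A (sact f x)),
      subf q = sact f (subf p) }.

Definition bdry (n : nat) : subcx (Delta n).
Proof.
refine (@SubCx (Delta n) (fun k (s : mono k n) =>
          exists j : 'I_n.+1, forall a, sval s a != j) _).
move=> k m f s [j Hj]; exists j => a /=; rewrite ffunE; exact: Hj.
Defined.

(* Horn Lambda^n_i = union over j <> i of the faces d_j Delta^n
   (simplices whose image misses j). *)
Definition horn (n : nat) (i : 'I_n.+1) : subcx (Delta n).
Proof.
refine (@SubCx (Delta n) (fun k (s : mono k n) =>
          exists j : 'I_n.+1, j != i /\ forall a, sval s a != j) _).
move=> k m f s [j [ji Hj]]; exists j; split => // a /=; rewrite ffunE; exact: Hj.
Defined.

Definition hornprodL (m n : nat) (i : 'I_m.+1) : subcx (ProdS (Delta m) (Delta n)).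
Proof.
refine (@SubCx (ProdS (Delta m) (Delta n))
   (fun k p => smem (horn i) p.1 \/ smem (bdry n) p.2) _).
move=> k l f [s t] [H|H]; [left; exact: (sclosed f H)|right; exact: (sclosed f H)].
Defined.

Definition hornprodR (m n : nat) (j : 'I_n.+1) : subcx (ProdS (Delta m) (Delta n)).
Proof.
refine (@SubCx (ProdS (Delta m) (Delta n))
   (fun k p => smem (bdry m) p.1 \/ smem (horn j) p.2) _).
move=> k l f [s t] [H|H]; [left; exact: (sclosed f H)|right; exact: (sclosed f H)].
Defined.

(* F' is the pushout of F <-y- Lambda^n_i -> Delta^n, with structure maps the
   inclusion F -> F' and x : Delta^n -> F'. *)
Definition is_horn_pushout (X : sSet) (F F' : subcx X) (n : nat) (i : 'I_n.+1)
    (x : smap (Delta n) X) (y : submap (horn i) X) : Prop :=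
  (forall k (t : X k), smem F t -> smem F' t) /\
  (forall k (s : Delta n k), smem F' (x k s)) /\
  (forall k (s : Delta n k) (h : smem (horn i) s), smem F (y k s h)) /\
  (forall k (s : Delta n k) (h : smem (horn i) s), y k s h = x k s) /\
  (forall (Z : sSet) (a : submap F Z) (b : smap (Delta n) Z),
     (forall k (s : Delta n k) (h : smem (horn i) s) (q : smem F (y k s h)),
        a k (y k s h) q = b k s) ->
     exists c : submap F' Z,
       (forall k (t : X k) (p : smem F t) (p' : smem F' t), c k t p' = a k t p) /\
       (forall k (s : Delta n k) (p' : smem F' (x k s)), c k (x k s) p' = b k s) /\
       (forall c' : submap F' Z,
          (forall k (t : X k) (p : smem F t) (p' : smem F' t), c' k t p' = a k t p) ->
          (forall k (s : Delta n k) (p' : smem F' (x k s)), c' k (x k s) p' = b k s) ->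
          forall k (t : X k) (p' : smem F' t), c' k t p' = c k t p')).

(* Length of the filtration: None = infinite, Some L = steps 0..L-1. *)
Definition inrange (len : option nat) (l : nat) : Prop :=
  match len with None => True | Some L => l < L end.
Definition reach (len : option nat) (l : nat) : Prop :=
  match len with None => True | Some L => l <= L end.

(* The inclusion S -> X is an m-expansion.  F l here is F_{l-1}X of the paper;
   step l attaches an (nn l)-simplex along the horn Lambda^{nn l}_{ii l}. *)
Definition expansion (m : nat) (X : sSet) (S : subcx X) : Prop :=
  exists (len : option nat) (F : nat -> subcx X) (nn : nat -> nat)
         (ii : forall l, 'I_(nn l).+1)
         (x : forall l, smap (Delta (nn l)) X)
         (y : forall l, submap (horn (ii l)) X),
    (forall k (t : X k), smem (F 0) t <-> smem S t) /\
    (forall k (t : X k), exists l, reach len l /\ smem (F l) t) /\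
    (forall l, inrange len l -> m <= nn l) /\
    (forall l, inrange len l.+1 -> nn l <= nn l.+1) /\
    (forall l, inrange len l -> is_horn_pushout (F l) (F l.+1) (x l) (y l)).

(* A simplex of Delta^m x Delta^n is determined by its chain of vertices in the
   poset [m] x [n], and it lies outside Lambda^{m,n}_i exactly when that chain
   meets every row and every column other than i.  The pivot of such a chain A
   is the point of column i where A crosses that column; adding it keeps A a
   chain and does not change the pivot.  The chains containing their pivot are
   attached one at a time along the horn opposite the pivot, by increasing size
   and then by decreasing number of vertices in column i: with this order every
   other facet of such a chain is either in Lambda^{m,n}_i or a face of a chain
   attached earlier, and the pairing A <-> A + pivot(A) shows that everything
   gets attached.  Such a chain meets all m+1 columns, so it spans a simplex of
   dimension at least m.  The second statement is the first with the two
   factors exchanged. *)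

From mathcomp Require Import all_boot zify.
From Stdlib Require Import ClassicalEpsilon Classical.
Set Implicit Arguments. Unset Strict Implicit. Unset Printing Implicit Defensive.

Definition restrict_horn d (i : 'I_d.+1) X (x : smap (Delta d) X) :
  submap (horn i) X.
Proof.
refine (@SubMap _ (horn i) X (fun k s _ => x k s) _ _) => //.
by move=> k n f s _ _; exact: smnat.
Defined.

Section HornAttachment.
Variables (X : sSet) (F F' : subcx X) (d : nat) (i : 'I_d.+1).
Variable x : smap (Delta d) X.
Hypothesis F'_cover : forall k (t : X k), smem F' t -> smem F t \/ exists s, x k s = t.
Hypothesis x_in_F : forall k (s : Delta d k), smem F (x k s) <-> smem (horn i) s.
Hypothesis x_inj : forall k (s s' : Delta d k), x k s = x k s' -> s = s'.

Variables (Z : sSet) (a : submap F Z) (b : smap (Delta d) Z).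
Hypothesis ab_agree : forall k (s : Delta d k) (h : smem (horn i) s)
   (q : smem F (restrict_horn i x k s h)), a k (restrict_horn i x k s h) q = b k s.

(* Off [F] a simplex of [F'] has a unique [x]-preimage, since [x] is injective,
   so the choice made here is immaterial. *)
Definition glue_at k (t : X k) (p' : smem F' t) : Z k :=
  match excluded_middle_informative (smem F t) with
  | left p => a k t p
  | right np =>
      let ex_s := match F'_cover p' with
                  | or_introl p => False_ind _ (np p)
                  | or_intror e => e end in
      b k (proj1_sig (constructive_indefinite_description _ ex_s))
  end.

Lemma glue_atF k (t : X k) (p' : smem F' t) (p : smem F t) : glue_at p' = a k t p.
Proof.
by rewrite /glue_at; case: excluded_middle_informative => [p0|//]; exact: subpi.
Qed.

Lemma glue_atx k (s : Delta d k) (p' : smem F' (x k s)) : glue_at p' = b k s.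
Proof.
rewrite /glue_at; case: excluded_middle_informative => [p|np].
  exact: (@ab_agree k s ((x_in_F s).1 p) p).
by case: constructive_indefinite_description => s' /= /x_inj ->.
Qed.

Definition glue : submap F' Z.
Proof.
refine (@SubMap _ F' Z glue_at _ _).
- move=> k t p q; case: (classic (smem F t)) => [h|h].
    by rewrite !(glue_atF _ h).
  by case: (F'_cover p) => // -[s e]; subst t; rewrite !glue_atx.
- move=> k n f t p q; case: (classic (smem F t)) => [h|h].
    by rewrite (glue_atF _ h) (glue_atF _ (sclosed f h)); exact: subnat.
  case: (F'_cover p) => // -[s e]; subst t.
  by move: q; rewrite -smnat => q; rewrite !glue_atx smnat.
Defined.

End HornAttachment.

Lemma horn_attachment_pushout X (F F' : subcx X) d (i : 'I_d.+1)
    (x : smap (Delta d) X) :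
  (forall k (t : X k), smem F t -> smem F' t) ->
  (forall k (s : Delta d k), smem F' (x k s)) ->
  (forall k (t : X k), smem F' t -> smem F t \/ exists s, x k s = t) ->
  (forall k (s : Delta d k), smem F (x k s) <-> smem (horn i) s) ->
  (forall k (s s' : Delta d k), x k s = x k s' -> s = s') ->
  is_horn_pushout F F' x (restrict_horn i x).
Proof.
move=> sub_FF' x_in_F' F'_cover x_in_F x_inj.
split=> //; split=> //; split; first by move=> k s h; exact/x_in_F.
split=> // Z a b ab_agree.
exists (glue F'_cover x_in_F x_inj ab_agree); split; [|split].
- by move=> k t p p'; exact: glue_atF.
- by move=> k s p'; exact: glue_atx.
- move=> c' c'a c'b k t p' /=; case: (classic (smem F t)) => [h|h].
    by rewrite (c'a _ _ h) glue_atF.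
  case: (F'_cover _ _ p') => // -[s e]; subst t.
  by rewrite c'b (glue_atx F'_cover x_in_F x_inj ab_agree).
Qed.

Lemma mcompE k l n (g : mono l n) (f : mono k l) a :
  sval (mcomp g f) a = sval g (sval f a).
Proof. by rewrite /= ffunE. Qed.

Lemma mcompA k l p n (g : mono p n) (s : mono l p) (f : mono k l) :
  mcomp g (mcomp s f) = mcomp (mcomp g s) f.
Proof. by apply: val_inj; apply/ffunP => a; rewrite !mcompE. Qed.

Lemma monob_const0 k n : monob ([ffun _ => ord0] : {ffun 'I_k.+1 -> 'I_n.+1}).
Proof. by apply/forallP => a; apply/forallP => b; rewrite !ffunE; apply/implyP. Qed.

Definition mono_of k n (f : {ffun 'I_k.+1 -> 'I_n.+1}) : mono k n :=
  insubd (exist (fun h => monob h) _ (monob_const0 k n)) f.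

Lemma mono_ofE k n (f : {ffun 'I_k.+1 -> 'I_n.+1}) : monob f -> sval (mono_of f) = f.
Proof. exact: insubdK. Qed.

Section ProductChains.
Variables m n : nat.

Definition point := ('I_m.+1 * 'I_n.+1)%type.
Definition DxD := ProdS (Delta m) (Delta n).
Implicit Types (A B : {set point}) (p q : point).

Definition le_pt p q := (p.1 <= q.1) && (p.2 <= q.2).
Definition chain A := [forall p in A, forall q in A, le_pt p q || le_pt q p].
Definition vertex k (t : DxD k) (a : 'I_k.+1) : point := (sval t.1 a, sval t.2 a).
Definition vertices k (t : DxD k) : {set point} := [set vertex t a | a : 'I_k.+1].

Lemma le_pt_refl : reflexive le_pt.
Proof. by move=> p; rewrite /le_pt !leqnn. Qed.

Lemma le_pt_trans : transitive le_pt.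
Proof.
move=> q p r /andP[h1 h2] /andP[h3 h4].
by rewrite /le_pt (leq_trans h1 h3) (leq_trans h2 h4).
Qed.

Lemma le_pt_anti p q : le_pt p q -> le_pt q p -> p = q.
Proof.
case: p q => [x y] [x' y'] /andP[/= h1 h2] /andP[/= h3 h4].
have -> : x = x' by apply/val_inj/eqP; rewrite eqn_leq h1 h3.
by have -> : y = y' by apply/val_inj/eqP; rewrite eqn_leq h2 h4.
Qed.

Lemma chainP A :
  reflect {in A &, forall p q, le_pt p q || le_pt q p} (chain A).
Proof.
apply: (iffP forallP) => [H p q pA qA|H p].
  by have/implyP/(_ pA)/forallP/(_ q)/implyP/(_ qA) := H p.
apply/implyP => pA; apply/forallP => q; apply/implyP => qA; exact: H.
Qed.

Lemma chain_subset A B : A \subset B -> chain B -> chain A.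
Proof. by move=> /subsetP sAB /chainP cB; apply/chainP => p q /sAB pB /sAB; exact: cB. Qed.

Lemma chain_setU1 A q : chain A -> {in A, forall p, le_pt p q || le_pt q p} ->
  chain (q |: A).
Proof.
move=> /chainP cA hq; apply/chainP => p p'; rewrite !in_setU1.
case/orP => [/eqP->|pA]; case/orP => [/eqP->|p'A].
- by rewrite le_pt_refl.
- by rewrite orbC hq.
- exact: hq.
- exact: cA.
Qed.

Lemma vertex_mono k (t : DxD k) (a b : 'I_k.+1) : a <= b -> le_pt (vertex t a) (vertex t b).
Proof.
case: t => [[f hf] [g hg]] ab; rewrite /le_pt /vertex /=.
have/forallP/(_ a)/forallP/(_ b)/implyP/(_ ab) -> := hf.
by have/forallP/(_ a)/forallP/(_ b)/implyP/(_ ab) -> := hg.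
Qed.

Lemma chain_vertices k (t : DxD k) : chain (vertices t).
Proof.
apply/chainP => _ _ /imsetP[a _ ->] /imsetP[b _ ->].
case: (leqP a b) => ab; first by rewrite vertex_mono.
by rewrite orbC vertex_mono // ltnW.
Qed.

Lemma simplex_eq k (t t' : DxD k) : (forall a, vertex t a = vertex t' a) -> t = t'.
Proof.
case: t t' => [s1 s2] [s1' s2'] /= h.
by congr pair; apply/val_inj/ffunP => a; have [] := h a.
Qed.

Lemma vertices_sact k l (f : mono k l) (t : DxD l) :
  vertices (sact f t) \subset vertices t.
Proof.
apply/subsetP => _ /imsetP[a _ ->]; apply/imsetP; exists (sval f a) => //.
by rewrite /vertex /= !mcompE.
Qed.

Definition chain_seq A := sort le_pt (enum A).
Definition cdim A := #|A|.-1.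
Definition chain_nth A j := nth (ord0, ord0) (chain_seq A) j.

Lemma size_chain_seq A : size (chain_seq A) = #|A|.
Proof. by rewrite size_sort cardE. Qed.

Lemma uniq_chain_seq A : uniq (chain_seq A).
Proof. by rewrite sort_uniq enum_uniq. Qed.

Lemma mem_chain_seq A p : (p \in chain_seq A) = (p \in A).
Proof. by rewrite mem_sort mem_enum. Qed.

Lemma sorted_chain_seq A : chain A -> sorted le_pt (chain_seq A).
Proof.
move=> /chainP cA; apply: (@sort_sorted_in _ (mem A)) => //.
by apply/allP => p; rewrite mem_enum.
Qed.

Lemma cdimS A p : p \in A -> (cdim A).+1 = #|A|.
Proof. by move=> pA; rewrite /cdim prednK //; apply/card_gt0P; exists p. Qed.

Lemma chain_nth_in A j : j < #|A| -> chain_nth A j \in A.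
Proof. by move=> h; rewrite -mem_chain_seq mem_nth // size_chain_seq. Qed.

Lemma chain_nth_inj A i j : i < #|A| -> j < #|A| -> chain_nth A i = chain_nth A j -> i = j.
Proof.
move=> hi hj e; apply/eqP.
rewrite -(nth_uniq (ord0, ord0) _ _ (uniq_chain_seq A)) ?size_chain_seq //.
by rewrite -/(chain_nth A i) e.
Qed.

Lemma chain_nth_mono A i j : chain A -> i <= j -> j < #|A| ->
  le_pt (chain_nth A i) (chain_nth A j).
Proof.
move=> cA ij hj.
apply: (sorted_leq_nth le_pt_trans le_pt_refl _ (sorted_chain_seq cA)) => //.
  by rewrite inE size_chain_seq (leq_ltn_trans ij).
by rewrite inE size_chain_seq.
Qed.

Lemma index_chain_seq_lt A p : p \in A -> index p (chain_seq A) < #|A|.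
Proof. by move=> pA; rewrite -size_chain_seq index_mem mem_chain_seq. Qed.

Lemma chain_nth_index A p : p \in A -> chain_nth A (index p (chain_seq A)) = p.
Proof. by move=> pA; rewrite /chain_nth nth_index ?mem_chain_seq. Qed.

Lemma index_chain_seq_mono A p q : chain A -> p \in A -> q \in A -> le_pt p q ->
  index p (chain_seq A) <= index q (chain_seq A).
Proof.
move=> cA pA qA pq; rewrite leqNgt; apply/negP => qp.
have := chain_nth_mono cA (ltnW qp) (index_chain_seq_lt pA).
rewrite !chain_nth_index // => qp'.
by move: qp; rewrite (le_pt_anti pq qp') ltnn.
Qed.

End ProductChains.

Section ChainSimplex.
Variables (m n : nat) (A : {set point m n}).

Definition chain_simplex : DxD m n (cdim A) :=
  (mono_of [ffun a : 'I_(cdim A).+1 => (chain_nth A a).1],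
   mono_of [ffun a : 'I_(cdim A).+1 => (chain_nth A a).2]).

Definition chain_map : smap (Delta (cdim A)) (DxD m n).
Proof.
refine (@SMap (Delta (cdim A)) (DxD m n)
  (fun k (s : mono k (cdim A)) => @sact (DxD m n) _ _ s chain_simplex) _).
by move=> k l f s /=; rewrite !mcompA.
Defined.

Definition horn_index (q : point m n) : 'I_(cdim A).+1 := inord (index q (chain_seq A)).

Variable p0 : point m n.
Hypotheses (cA : chain A) (p0A : p0 \in A).

Lemma ord_cdim_lt_card (a : 'I_(cdim A).+1) : a < #|A|.
Proof. by rewrite -(cdimS p0A). Qed.

Lemma vertex_chain_simplex a : vertex chain_simplex a = chain_nth A a.
Proof.
have mono_nth (a0 b0 : 'I_(cdim A).+1) :
    a0 <= b0 -> le_pt (chain_nth A a0) (chain_nth A b0).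
  by move=> ab; apply: chain_nth_mono => //; exact: ord_cdim_lt_card.
rewrite /vertex /= !mono_ofE ?ffunE; first by case: (chain_nth A a).
all: apply/forallP => a0; apply/forallP => b0; apply/implyP => ab; rewrite !ffunE.
all: by have/andP[] := mono_nth _ _ ab.
Qed.

Lemma vertex_chain_map k (s : mono k (cdim A)) a :
  vertex (chain_map k s) a = chain_nth A (sval s a).
Proof. by rewrite -vertex_chain_simplex /vertex /= !mcompE. Qed.

Lemma vertices_chain_map k (s : mono k (cdim A)) :
  vertices (chain_map k s) = [set chain_nth A (sval s a) | a : 'I_k.+1].
Proof. by apply: eq_imset => a; rewrite vertex_chain_map. Qed.

Lemma chain_map_inj k (s s' : mono k (cdim A)) : chain_map k s = chain_map k s' -> s = s'.
Proof.
move=> e; apply/val_inj/ffunP => a; apply/val_inj.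
have := congr1 (fun t => vertex t a) e; rewrite !vertex_chain_map.
exact: chain_nth_inj (ord_cdim_lt_card _) (ord_cdim_lt_card _).
Qed.

Lemma vertices_chain_map_sub k (s : mono k (cdim A)) : vertices (chain_map k s) \subset A.
Proof.
rewrite vertices_chain_map; apply/subsetP => _ /imsetP[a _ ->].
exact/chain_nth_in/ord_cdim_lt_card.
Qed.

Lemma chain_map_onto k (t : DxD m n k) :
  vertices t \subset A -> exists s, chain_map k s = t.
Proof.
move=> /subsetP tA.
have vtA a : vertex t a \in A by apply/tA/imset_f.
have idx_lt a : index (vertex t a) (chain_seq A) < (cdim A).+1.
  by rewrite (cdimS p0A) index_chain_seq_lt.
pose f := [ffun a => (inord (index (vertex t a) (chain_seq A)) : 'I_(cdim A).+1)].
have mf : monob f.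
  apply/forallP => a; apply/forallP => b; apply/implyP => ab; rewrite !ffunE !inordK //.
  exact/index_chain_seq_mono/vertex_mono.
exists (mono_of f); apply: simplex_eq => a.
by rewrite vertex_chain_map mono_ofE // ffunE inordK // chain_nth_index.
Qed.

Lemma horn_chain_map k (s : mono k (cdim A)) :
  smem (horn (horn_index p0)) s <->
  exists2 q, q \in A & (q != p0) && (q \notin vertices (chain_map k s)).
Proof.
rewrite vertices_chain_map.
have index_ltS q : q \in A -> index q (chain_seq A) < (cdim A).+1.
  by move=> qA; rewrite (cdimS p0A) index_chain_seq_lt.
split=> [[j [jp0 s_j]]|[q qA /andP[qp0 q_s]]].
  exists (chain_nth A j); first exact/chain_nth_in/ord_cdim_lt_card.
  apply/andP; split.
    apply: contra jp0 => /eqP e; apply/eqP/val_inj; rewrite /= inordK ?index_ltS //.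
    apply: (chain_nth_inj (ord_cdim_lt_card _) (index_chain_seq_lt p0A)).
    by rewrite chain_nth_index.
  apply/imsetP => -[a _ e]; move: (s_j a); rewrite -(inj_eq val_inj) /=.
  by rewrite (chain_nth_inj (ord_cdim_lt_card _) (ord_cdim_lt_card _) e) eqxx.
exists (inord (index q (chain_seq A))); split.
  rewrite -(inj_eq val_inj) /= !inordK ?index_ltS //.
  by apply: contra qp0 => /eqP e; rewrite -(chain_nth_index qA) e chain_nth_index.
move=> a; apply: contraNneq q_s => e; apply/imsetP; exists a => //.
by rewrite e inordK ?index_ltS // chain_nth_index.
Qed.

End ChainSimplex.

Section AttachmentOrder.
Variables (m n d : nat) (S : subcx (DxD m n)).
Variables (outside : {set point m n} -> bool) (pivot : {set point m n} -> point m n)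
  (pivotal : point m n -> bool).
Implicit Types (A B C D : {set point m n}) (q : point m n).

Hypothesis S_outside : forall k (t : DxD m n k), smem S t <-> ~~ outside (vertices t).
Hypothesis outside_subset : forall A B, A \subset B -> outside A -> outside B.
Hypothesis pivotal_pivot : forall A, pivotal (pivot A).
Hypothesis pivot_U1 : forall A q, pivotal q -> pivot (q |: A) = pivot A.
Hypothesis outside_D1pivot : forall A, chain A -> outside A -> outside (A :\ pivot A).
Hypothesis chain_U1pivot : forall A, chain A -> outside A -> chain (pivot A |: A).
Hypothesis card_cell : forall A, chain A -> outside A -> pivot A \in A -> d < #|A|.

Definition cell A := [&& chain A, outside A & pivot A \in A].
Definition npivotal A := #|[set p in A | pivotal p]|.

(* Cells are attached by increasing size and, among cells of equal size, by
   decreasing number of pivotal vertices; this makes the horn of each cell a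
   union of faces of earlier cells or of simplices of [S]. *)
Definition cell_le A B :=
  (#|A| < #|B|) || ((#|A| == #|B|) && (npivotal B <= npivotal A)).

Lemma cell_le_refl : reflexive cell_le.
Proof. by move=> A; rewrite /cell_le eqxx leqnn orbT. Qed.

Lemma cell_le_trans : transitive cell_le.
Proof.
move=> B A C; rewrite /cell_le.
case/orP => [h1|/andP[/eqP e1 h1]]; case/orP => [h2|/andP[/eqP e2 h2]].
- by rewrite (ltn_trans h1 h2).
- by rewrite -e2 h1.
- by rewrite e1 h2.
- by rewrite e1 e2 eqxx (leq_trans h2 h1) orbT.
Qed.

Lemma cell_le_total : total cell_le.
Proof. by move=> A B; rewrite /cell_le; case: ltngtP => //= _; exact: leq_total. Qed.

Lemma npivotalU1 q A : npivotal (q |: A) = (pivotal q && (q \notin A)) + npivotal A.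
Proof.
rewrite /npivotal; case pq: (pivotal q) => /=.
  rewrite (_ : [set p in q |: A | pivotal p] = q |: [set p in A | pivotal p]).
    by rewrite cardsU1 inE pq andbT.
  by apply/setP => p; rewrite !inE; case: eqVneq => [->|].
by apply: eq_card => p; rewrite !inE; case: eqVneq => [->|]; rewrite ?pq ?andbF.
Qed.

Lemma cell_U1pivot A : chain A -> outside A -> cell (pivot A |: A).
Proof.
move=> cA oA; rewrite /cell chain_U1pivot //= (outside_subset (subsetUr _ _) oA).
by rewrite pivot_U1 // setU11.
Qed.

Lemma cell_cover A : chain A -> outside A -> exists2 C, cell C & A \subset C.
Proof.
move=> cA oA; case: (boolP (pivot A \in A)) => pA.
  by exists A; rewrite ?/cell ?cA ?oA.
by exists (pivot A |: A); [exact: cell_U1pivot | exact: subsetUr].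
Qed.

Lemma cell_facet_le A B : cell A -> cell B -> A :\ pivot A \subset B -> cell_le B A ->
  B = A.
Proof.
move=> /and3P[_ _ pA] /and3P[_ _ pB] DB leBA.
set D := A :\ pivot A in DB.
have eA : A = pivot A |: D by rewrite setD1K.
have pivotD : pivot D = pivot A by rewrite [in RHS]eA pivot_U1.
have cardA : #|A| = #|D|.+1 by rewrite (cardsD1 (pivot A) A) pA.
have cardBA : #|B| <= #|A| by case/orP: leBA => [/ltnW|/andP[/eqP ->]].
have [pAB|npAB] := boolP (pivot A \in B).
  by apply/esym/eqP; rewrite eqEcard cardBA andbT eA subUset sub1set pAB.
have [BD|/subsetPn[q qB qD]] := boolP (B \subset D).
  have eBD : B = D by apply/eqP; rewrite eqEsubset BD.
  by move: pB npAB; rewrite eBD pivotD => ->.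
have eB : B = q |: D.
  by apply/esym/eqP; rewrite eqEcard subUset sub1set qB DB cardsU1 qD add1n -cardA.
case pq: (pivotal q).
  by move: pB npAB; rewrite eB pivot_U1 // pivotD => ->.
move: leBA; rewrite /cell_le eB cardsU1 qD add1n -cardA ltnn eqxx /=.
by rewrite {1}eA !npivotalU1 pq pivotal_pivot setD11 /= add1n ltnn.
Qed.

Lemma earlier_cell_face A q : cell A -> q \in A -> q != pivot A -> outside (A :\ q) ->
  exists2 B, cell B & (A :\ q \subset B) && ~~ cell_le A B.
Proof.
move=> /and3P[cA _ pA] qA qp oD; set D := A :\ q in oD *.
have cD : chain D := chain_subset (subD1set A q) cA.
have eA : A = q |: D by rewrite setD1K.
have cardA : #|A| = #|D|.+1 by rewrite (cardsD1 q A) qA.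
have [pD|npD] := boolP (pivot D \in D).
  exists D; first by rewrite /cell cD oD pD.
  by rewrite subxx /=; apply/negP; rewrite /cell_le cardA => /orP[|/andP[/eqP]]; lia.
have npq : ~~ pivotal q.
  apply: contra npD => pq; have pDA : pivot D = pivot A by rewrite [in RHS]eA pivot_U1.
  by rewrite pDA !inE eq_sym qp pA.
exists (pivot D |: D); first exact: cell_U1pivot.
rewrite subsetUr /= /cell_le cardsU1 npD cardA ltnn eqxx /=.
by rewrite {1}eA !npivotalU1 (negbTE npq) pivotal_pivot npD /= add1n ltnn.
Qed.

Definition cells := sort cell_le [seq A <- enum [set: {set point m n}] | cell A].
Definition cell_at r := nth set0 cells r.

Lemma mem_cells A : (A \in cells) = cell A.
Proof. by rewrite mem_sort mem_filter mem_enum in_setT andbT. Qed.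

Lemma cell_at_cell r : r < size cells -> cell (cell_at r).
Proof. by move=> h; rewrite -mem_cells mem_nth. Qed.

Lemma cell_at_le r l : r <= l -> l < size cells -> cell_le (cell_at r) (cell_at l).
Proof.
move=> rl hl; apply: (sorted_leq_nth cell_le_trans cell_le_refl) => //.
- exact: sort_sorted cell_le_total _.
- by rewrite inE (leq_ltn_trans rl).
Qed.

Lemma cell_at_neq r l : r < l -> l < size cells -> cell_at r != cell_at l.
Proof.
move=> rl hl; rewrite /cell_at nth_uniq ?(ltn_trans rl) ?neq_ltn ?rl //.
by rewrite sort_uniq filter_uniq // enum_uniq.
Qed.

Lemma cell_before l B : l < size cells -> cell B -> ~~ cell_le (cell_at l) B ->
  exists r, [/\ r < l, r < size cells & cell_at r = B].
Proof.
move=> hl cB nle; have hB : index B cells < size cells by rewrite index_mem mem_cells.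
exists (index B cells); split => //; last by rewrite /cell_at nth_index // mem_cells.
rewrite ltnNge; apply: contra nle => le.
by have := cell_at_le le hB; rewrite {2}/cell_at nth_index // mem_cells.
Qed.

Definition stage (l : nat) : subcx (DxD m n).
Proof.
refine (@SubCx _ (fun k t => smem S t \/
   exists r, [/\ r < l, r < size cells & vertices t \subset cell_at r]) _).
move=> k k' f t [h|[r [rl rs tr]]]; first by left; exact: sclosed.
by right; exists r; split => //; exact: subset_trans (vertices_sact f t) tr.
Defined.

Lemma stage_face l C : l < size cells -> C \subset cell_at l ->
  (~~ outside C \/ exists r, [/\ r < l, r < size cells & C \subset cell_at r]) <->
  exists2 q, q \in cell_at l & (q != pivot (cell_at l)) && (q \notin C).
Proof.
move=> hl CA; have := cell_at_cell hl; set A := cell_at l => cellA.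
split=> [Hst|[q qA /andP[qp qC]]].
  apply: NNPP => no_q.
  have DC : A :\ pivot A \subset C.
    apply/subsetP => p; rewrite !inE => /andP[pp pA]; apply: NNPP => pC.
    by apply: no_q; exists p => //; rewrite pp; exact/negP.
  have oC : outside C.
    by case/and3P: cellA => cA oA _; exact: outside_subset DC (outside_D1pivot cA oA).
  case: Hst => [|[r [rl rs CB]]]; first by rewrite oC.
  move/negP: (cell_at_neq rl hl); apply; apply/eqP.
  exact: cell_facet_le (cell_at_cell rs) (subset_trans DC CB) (cell_at_le (ltnW rl) hl).
have CD : C \subset A :\ q.
  apply/subsetP => p pC; rewrite !inE (subsetP CA _ pC) andbT.
  by apply: contraNneq qC => <-.
have [oD|noD] := boolP (outside (A :\ q)); last first.
  by left; apply: contra noD; exact: outside_subset.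
right; have [B cB /andP[DB ltAB]] := earlier_cell_face cellA qA qp oD.
have [r [rl rs eB]] := cell_before hl cB ltAB.
by exists r; split => //; rewrite eB; exact: subset_trans CD DB.
Qed.

Definition cell_dim l := cdim (cell_at l).
Definition cell_horn l : 'I_(cell_dim l).+1 := horn_index (cell_at l) (pivot (cell_at l)).

Lemma stage_step l : l < size cells ->
  is_horn_pushout (stage l) (stage l.+1) (chain_map (cell_at l))
    (restrict_horn (cell_horn l) (chain_map (cell_at l))).
Proof.
move=> hl; have /and3P[cA oA pA] := cell_at_cell hl.
apply: horn_attachment_pushout.
- move=> k t [h|[r [rl rs tr]]]; first by left.
  by right; exists r; split => //; rewrite ltnS ltnW.
- by move=> k s; right; exists l; split => //; exact: (vertices_chain_map_sub cA pA).
- move=> k t [h|[r [rl rs tr]]]; first by left; left.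
  move: rl; rewrite ltnS leq_eqVlt => /orP[/eqP e|rl]; last by left; right; exists r.
  by subst r; right; exact: chain_map_onto cA pA _ _ tr.
- move=> k s; rewrite (horn_chain_map cA pA).
  rewrite -(stage_face hl (vertices_chain_map_sub cA pA _)) /=.
  by rewrite S_outside.
- by move=> k s s'; exact: (chain_map_inj cA pA).
Qed.

Lemma expansion_of_pivot : expansion d S.
Proof.
exists (Some (size cells)), stage, cell_dim, cell_horn, (fun l => chain_map (cell_at l)),
  (fun l => restrict_horn (cell_horn l) (chain_map (cell_at l))).
split; [|split; [|split; [|split]]].
- by move=> k t; split => [[h|[r [//]]]|h] //; left.
- move=> k t; have [ot|not] := boolP (outside (vertices t)); last first.
    by exists 0; split => //; left; exact/S_outside.
  have [C cC tC] := cell_cover (chain_vertices t) ot.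
  have hC : index C cells < size cells by rewrite index_mem mem_cells.
  exists (index C cells).+1; split => //; right; exists (index C cells); split => //.
  by rewrite /cell_at nth_index ?mem_cells.
- move=> l /= hl; have /and3P[cA oA pA] := cell_at_cell hl.
  by rewrite /cell_dim /cdim; have := card_cell cA oA pA; case: #|_|.
- move=> l /= hl; rewrite /cell_dim /cdim -!subn1 leq_sub2r //.
  by case/orP: (cell_at_le (leqnSn l) hl) => [/ltnW|/andP[/eqP ->]].
- by move=> l hl; exact: stage_step.
Qed.

End AttachmentOrder.

(* [px] is the coordinate of the horn factor, [py] that of the other factor;
   exchanging the two coordinates gives the second half of the theorem. *)
Section Pivot.
Variables (m n a b : nat).
Local Notation point := (point m n).
Variables (px : point -> 'I_a.+1) (py : point -> 'I_b.+1).
Variable mkp : 'I_a.+1 -> 'I_b.+1 -> point.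
Hypotheses (pxK : forall x y, px (mkp x y) = x) (pyK : forall x y, py (mkp x y) = y).
Hypothesis le_ptE : forall p q, le_pt p q = (px p <= px q) && (py p <= py q).
Variable i : 'I_a.+1.
Hypothesis a_gt0 : 0 < a.
Implicit Types (A B L R : {set point}) (p q : point).

Definition outside_horn A :=
  [forall y, [exists p in A, py p == y]] &&
  [forall x, (x != i) ==> [exists p in A, px p == x]].

Definition on_column p := px p == i.
Definition left_of A := [set p in A | px p < i].
Definition right_of A := [set p in A | i < px p].

Definition pivot_height L R : 'I_b.+1 :=
  if [pick p in L] is Some p0 then py [arg max_(p > p0 in L) (py p : nat)]
  else if [pick p in R] is Some p0 then py [arg min_(p < p0 in R) (py p : nat)]
  else ord0.

(* The pivot sits in column [i] at the height where the chain [A] crosses that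
   column: the top of its part left of [i] or, failing that, the bottom of its
   part right of [i].  Hence it is comparable with every vertex of [A], and it
   only depends on the vertices of [A] outside column [i]. *)
Definition pivot A := mkp i (pivot_height (left_of A) (right_of A)).

Lemma pivot_height_left L R p : p \in L ->
  exists2 q, q \in L & pivot_height L R = py q /\ {in L, forall p', py p' <= py q}.
Proof.
move=> pL; rewrite /pivot_height; case: pickP => [p0 p0L|L0]; last by rewrite L0 in pL.
by case: arg_maxnP => // q qL qmax; exists q.
Qed.

Lemma pivot_height_right L R p : L = set0 -> p \in R ->
  exists2 q, q \in R & pivot_height L R = py q /\ {in R, forall p', py q <= py p'}.
Proof.
move=> -> pR; rewrite /pivot_height; case: pickP => [p0|_]; first by rewrite inE.
case: pickP => [p0 p0R|R0]; last by rewrite R0 in pR.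
by case: arg_minnP => // q qR qmin; exists q.
Qed.

Lemma on_column_pivot A : on_column (pivot A).
Proof. by rewrite /on_column pxK. Qed.

Lemma pivot_U1 A q : on_column q -> pivot (q |: A) = pivot A.
Proof.
move=> /eqP qi; rewrite /pivot /left_of /right_of.
by congr (mkp i (pivot_height _ _)); apply/setP => p; rewrite !inE;
  case: eqVneq => [->|]; rewrite ?qi ?ltnn ?andbF.
Qed.

Lemma outside_horn_subset A B : A \subset B -> outside_horn A -> outside_horn B.
Proof.
move=> /subsetP sAB /andP[/forallP hy /forallP hx]; apply/andP; split.
  apply/forallP => y; have/exists_inP[p pA e] := hy y.
  by apply/exists_inP; exists p; rewrite ?sAB.
apply/forallP => x; apply/implyP => xi; have/implyP/(_ xi)/exists_inP[p pA e] := hx x.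
by apply/exists_inP; exists p; rewrite ?sAB.
Qed.

Lemma pivot_level_witness A : outside_horn A ->
  exists2 q, q \in A & (px q != i) && (py q == py (pivot A)).
Proof.
move=> /andP[_ /forallP hx].
have [x xi] : exists x : 'I_a.+1, x != i.
  case: (eqVneq i ord0) => [->|]; last by exists ord0; rewrite eq_sym.
  by exists ord_max; apply/eqP => /(congr1 val) /= a0; move: a_gt0; rewrite a0.
have/implyP/(_ xi)/exists_inP[p pA /eqP px_p] := hx x.
have [L0|/set0Pn[p' p'L]] := eqVneq (left_of A) set0; last first.
  have [q] := pivot_height_left (right_of A) p'L.
  rewrite inE => /andP[qA qi] [e _]; exists q => //.
  by rewrite /pivot pyK e eqxx andbT neq_ltn qi.
have pR : p \in right_of A.
  rewrite inE pA /= px_p ltn_neqAle val_eqE eq_sym xi /= leqNgt.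
  apply: contraT; rewrite negbK => xi'.
  have : p \in left_of A by rewrite inE pA px_p.
  by rewrite L0 inE.

have [q] := pivot_height_right L0 pR.
rewrite inE => /andP[qA qi] [e _]; exists q => //.
by rewrite /pivot pyK e eqxx andbT neq_ltn qi orbT.
Qed.

Lemma outside_horn_D1pivot A : outside_horn A -> outside_horn (A :\ pivot A).
Proof.
move=> oA; have [q qA /andP[qi /eqP qpiv]] := pivot_level_witness oA.
have q_piv : q != pivot A by apply: contraNneq qi => ->; rewrite pxK.
move: oA => /andP[/forallP hy /forallP hx]; apply/andP; split.
  apply/forallP => y; have/exists_inP[p pA /eqP e] := hy y.
  apply/exists_inP; have [ep|ne] := eqVneq p (pivot A).
    by exists q; rewrite ?inE ?q_piv ?qA // qpiv -ep e.
  by exists p; rewrite ?inE ?ne ?pA ?e.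
apply/forallP => x; apply/implyP => xi; have/implyP/(_ xi)/exists_inP[p pA /eqP e] := hx x.
apply/exists_inP; exists p; rewrite ?inE ?pA ?e ?eqxx ?andbT //.
by apply: contraNneq xi => ep; rewrite -e ep pxK.
Qed.

Lemma chain_U1pivot A : chain A -> chain (pivot A |: A).
Proof.
move=> cA; apply: chain_setU1 => // p pA; rewrite !le_ptE /pivot pxK pyK.
case: (ltngtP (px p) i) => [lt|gt|_]; last by rewrite leq_total.
- have pL : p \in left_of A by rewrite inE pA lt.
  by have [q _ [-> /(_ p pL) ->]] := pivot_height_left (right_of A) pL.
- have [L0|/set0Pn[p' p'L]] := eqVneq (left_of A) set0.
    have pR : p \in right_of A by rewrite inE pA gt.
    by have [q _ [-> /(_ p pR) ->]] := pivot_height_right L0 pR; rewrite orbT.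
  have [q] := pivot_height_left (right_of A) p'L.
  rewrite inE => /andP[qA qi] [-> _].
  move/chainP/(_ q p qA pA): cA; rewrite !le_ptE => /orP[/andP[_ ->]//|/andP[pq _]].
  by move: (leq_trans pq (ltnW qi)); rewrite leqNgt gt.
Qed.

Lemma card_outside_horn A : outside_horn A -> pivot A \in A -> a < #|A|.
Proof.
move=> /andP[_ /forallP hx] pA.
have im : [set px p | p in A] = setT.
  apply/setP => x; rewrite inE; apply/imsetP.
  have [->|xi] := eqVneq x i; first by exists (pivot A); rewrite ?pxK.
  by have/implyP/(_ xi)/exists_inP[p p_A /eqP <-] := hx x; exists p.
by have := leq_imset_card px A; rewrite im cardsT card_ord.
Qed.

End Pivot.

Lemma expansion_of_outside_horn m n a b (px : point m n -> 'I_a.+1)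
    (py : point m n -> 'I_b.+1) (mkp : 'I_a.+1 -> 'I_b.+1 -> point m n)
    (i : 'I_a.+1) (S : subcx (DxD m n)) :
  (forall x y, px (mkp x y) = x) -> (forall x y, py (mkp x y) = y) ->
  (forall p q, le_pt p q = (px p <= px q) && (py p <= py q)) -> 0 < a ->
  (forall k (t : DxD m n k), smem S t <-> ~~ outside_horn px py i (vertices t)) ->
  expansion a S.
Proof.
move=> pxK pyK le_ptE a_gt0 S_outside.
apply: (expansion_of_pivot (pivot:=pivot px py mkp i) (pivotal:=on_column px i) S_outside).
- exact: outside_horn_subset.
- exact: on_column_pivot.
- exact: pivot_U1.
- by move=> A _; exact: outside_horn_D1pivot.
- by move=> A cA _; exact: chain_U1pivot.
- by move=> A _; exact: card_outside_horn.
Qed.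

Lemma vertices_avoid m n (T : eqType) k (t : DxD m n k) (f : point m n -> T) y :
  reflect (forall a, f (vertex t a) != y) (~~ [exists p in vertices t, f p == y]).
Proof.
apply: (iffP exists_inPn) => [h a|h _ /imsetP[a _ ->]]; last exact: h.
exact/h/imset_f.
Qed.

Lemma hornprodL_outside m n (i : 'I_m.+1) k (t : DxD m n k) :
  smem (hornprodL n i) t <->
  ~~ outside_horn (fun p : point m n => p.1) (fun p => p.2) i (vertices t).
Proof.
rewrite /outside_horn negb_and !negb_forall; split.
  case=> [[x [xi hx]]|[y hy]]; apply/orP; [right|left]; apply/existsP.
    by exists x; rewrite negb_imply xi; apply/vertices_avoid.
  by exists y; apply/vertices_avoid.
case/orP => /existsP[z]; last rewrite negb_imply => /andP[zi].
  by move/vertices_avoid => hz; right; exists z.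
by move/vertices_avoid => hz; left; exists z.
Qed.

Lemma hornprodR_outside m n (j : 'I_n.+1) k (t : DxD m n k) :
  smem (hornprodR m j) t <->
  ~~ outside_horn (fun p : point m n => p.2) (fun p => p.1) j (vertices t).
Proof.
rewrite /outside_horn negb_and !negb_forall; split.
  case=> [[x hx]|[y [yj hy]]]; apply/orP; [left|right]; apply/existsP.
    by exists x; apply/vertices_avoid.
  by exists y; rewrite negb_imply yj; apply/vertices_avoid.
case/orP => /existsP[z]; last rewrite negb_imply => /andP[zj].
  by move/vertices_avoid => hz; left; exists z.
by move/vertices_avoid => hz; right; exists z.
Qed.

Theorem lemma4p1 :
  (forall (m n : nat) (i : 'I_m.+1), 1 <= m ->
     @expansion m (ProdS (Delta m) (Delta n)) (hornprodL n i)) /\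
  (forall (m n : nat) (j : 'I_n.+1), 1 <= n ->
     @expansion n (ProdS (Delta m) (Delta n)) (hornprodR m j)).
Proof.
split=> [m n i m_gt0 | m n j n_gt0].
  apply: (@expansion_of_outside_horn m n m n (fun p => p.1) (fun p => p.2)
    (fun x y => (x, y)) i) => //.
  exact: hornprodL_outside.
apply: (@expansion_of_outside_horn m n n m (fun p => p.2) (fun p => p.1)
  (fun y x => (x, y)) j) => //.
- by move=> p q; rewrite /le_pt andbC.
- exact: hornprodR_outside.
Qed.
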